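(* (a) Every Steiner triple system on $9$ points of $3$-rank at most $8$ is resolvable. (b) Let $S$ be a Steiner triple system on $27$ points of $3$-rank at most $25$, with a decomposition into three groups $G_1,G_2,G_3$ of size $9$, three $STS(9)$'s on $G_1,G_2,G_3$, and one transversal design $TD[3;9]$ on $G_1,G_2,G_3$ (as in the context). If the Latin square of order $9$ corresponding to this transversal design has an orthogonal mate, then $S$ is resolvable; its blocks partition into $13$ parallel classes.
   Context: A Steiner triple system $STS(v)$ is a pair $(\mathcal{P},\mathcal{B})$ with $|\mathcal{P}|=v$ and $\mathcal{B}$ a set of $3$-subsets (blocks) such that every $2$-subset lies in exactly one block. Its $3$-rank is the rank over $\mathbb{F}_3$ of its block–point incidence matrix. A parallel class is a set of blocks partitioning the point set; the system is resolvable if its blocks can be partitioned into parallel classes. A transversal design $TD[3;T]$ on disjoint groups $H_1,H_2,H_3$ of size $T$ is a set of $T^2$ triples meeting each group once such that each pair of points from distinct groups lies in exactly one triple; equivalently a Latin square of order $T$ (rows $H_1$, columns $H_2$, symbols $H_3$). Two Latin squares of order $n$ are orthogonal if superimposing them yields every ordered pair of symbols exactly once; an orthogonal mate is a Latin square orthogonal to the given one. By the cited structure theorem (Jungnickel et al.), an $STS(27)$ of $3$-rank at most $25$ has its point set partitioned into three groups of size $9$ such that its blocks split into an $STS(9)$ on each group together with a $TD[3;9]$ on the three groups. *)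

From HB Require Import structures.
From mathcomp Require Import all_boot all_order all_algebra all_fingroup.
Set Implicit Arguments. Unset Strict Implicit. Unset Printing Implicit Defensive.
Import GRing.Theory.

Section Designs.
Variable T : finType.

Definition sts_on (P : {set T}) (B : {set {set T}}) : Prop :=
  (forall b, b \in B -> b \subset P /\ #|b| = 3) /\
  (forall x y, x \in P -> y \in P -> x != y ->
     #|[set b in B | (x \in b) && (y \in b)]| = 1).

Definition parallel_class (B P : {set {set T}}) : Prop :=
  P \subset B /\ partition P [set: T].

Definition resolution (B : {set {set T}}) (R : {set {set {set T}}}) : Prop :=
  partition R B /\ (forall P, P \in R -> parallel_class B P).

Definition resolvable (B : {set {set T}}) : Prop := exists R, resolution B R.

(* the third point of the block through x and y (x is a dummy default) *)
Definition third (B : {set {set T}}) (x y : T) : T :=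
  odflt x [pick z | [&& z != x, z != y & [set x; y; z] \in B]].

Definition latin_on (U : finType) (Rw C : {set T}) (S : {set U}) (L : T -> T -> U) : Prop :=
  [/\ #|Rw| = #|C|, #|C| = #|S|,
      (forall x y, x \in Rw -> y \in C -> L x y \in S),
      (forall x, x \in Rw -> {in C &, injective (L x)}) &
      (forall y, y \in C -> {in Rw &, injective (fun x => L x y)})].

Definition orthogonal_on (U V : finType) (Rw C : {set T})
    (L : T -> T -> U) (M : T -> T -> V) : Prop :=
  {in setX Rw C &, injective (fun p : T * T => (L p.1 p.2, M p.1 p.2))}.

End Designs.

Definition incmx (v : nat) (B : {set {set 'I_v}}) : 'M['F_3]_(#|B|, v) :=
  \matrix_(i < #|B|, j < v) (if j \in (enum_val i : {set 'I_v}) then 1%R else 0%R).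

Definition rank3 (v : nat) (B : {set {set 'I_v}}) : nat := \rank (incmx B).

From HB Require Import structures.
From mathcomp Require Import all_boot all_order all_algebra all_fingroup.
Set Implicit Arguments. Unset Strict Implicit. Unset Printing Implicit Defensive.

(* A resolution is encoded as a labelling of the blocks in which every point
   lies in exactly one block of each label; the label classes are then the
   parallel classes (resolution_of_label).

   (a) In any STS(9) each point is on four blocks (replication), so through a
   point off a block passes exactly one block disjoint from it (playfair).
   Hence "equal or disjoint" is an equivalence on the blocks whose classes are
   parallel classes; there are four of them, one per block through a fixed
   point.

   (b) The blocks of the three inner STS(9)'s are resolved by (a), giving
   labels 0..3 (the three resolutions are merged label by label).  A transversal
   block is the block of a cell (x, y) of the Latin square, and it gets label
   4 + M x y.  A point z of group j lies in exactly one transversal block with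
   symbol s, because the cells are in bijection with the pairs (point of G j,
   symbol): for the row and column groups since M is Latin, for the symbol
   group since M is an orthogonal mate.  This gives 4 + 9 = 13 classes. *)

Lemma cards1_intro (T : finType) (A : {set T}) x :
  x \in A -> (forall y, y \in A -> y = x) -> #|A| = 1.
Proof.
move=> xA onlyx; suff -> : A = [set x] by rewrite cards1.
by apply/setP=> y; rewrite inE; apply/idP/eqP=> [/onlyx|->].
Qed.

Lemma cards1_eq (T : finType) (A : {set T}) x y :
  #|A| = 1 -> x \in A -> y \in A -> x = y.
Proof. by move/eqP/cards1P=> [a ->]; rewrite !inE => /eqP-> /eqP->. Qed.

Lemma cards1_mem (T : finType) (A : {set T}) : #|A| = 1 -> exists x, x \in A.
Proof. by move/eqP/cards1P=> [a ->]; exists a; rewrite inE. Qed.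

(* An injection of A into a set C that is no larger than A is onto C, so
   every fibre over C is a singleton. *)
Lemma inj_fibre_card1 (aT rT : finType) (f : aT -> rT) (A : {set aT}) (C : {set rT}) t :
  {in A &, injective f} -> f @: A \subset C -> #|C| <= #|A| -> t \in C ->
  #|[set a in A | f a == t]| = 1.
Proof.
move=> injf sfAC leCA tC.
have /eqP fAC : f @: A == C by rewrite eqEcard sfAC card_in_imset.
move: tC; rewrite -fAC => /imsetP [a aA ->].
apply: (cards1_intro (x := a)); first by rewrite inE aA eqxx.
by move=> b; rewrite inE => /andP [bA /eqP /injf]; apply.
Qed.

Lemma disjoint3_cover (T : finType) (A B C : {set T}) :
  [disjoint A & B] -> [disjoint A & C] -> [disjoint B & C] ->
  #|A| + #|B| + #|C| = #|T| -> A :|: B :|: C = [set: T].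
Proof.
move=> dAB dAC dBC sizes; apply/eqP; rewrite eqEcard subsetT cardsT -sizes.
rewrite cardsU setIUl (disjoint_setI0 dAC) (disjoint_setI0 dBC) setU0 cards0.
by rewrite /= cardsU (disjoint_setI0 dAB) cards0 !subn0.
Qed.

Definition label_resolves (T : finType) (P : {set T}) (B : {set {set T}}) n
    (f : {set T} -> 'I_n) : Prop :=
  forall k x, x \in P -> #|[set c in B | (f c == k) && (x \in c)]| = 1.

Lemma label_of_partition (T : finType) (P : {set T}) (B : {set {set T}})
    (Rs : {set {set {set T}}}) n :
  partition Rs B -> #|Rs| = n.+1 ->
  (forall K z, K \in Rs -> z \in P -> #|[set c in K | z \in c]| = 1) ->
  exists f : {set T} -> 'I_n.+1, label_resolves P B f.
Proof.
move=> partRs cardRs classP.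
have [covRs tiRs] := (cover_partition partRs, partition_trivIset partRs).
pose e := enum Rs; have size_e : size e = n.+1 by rewrite -cardE.
exists (fun c => inord (index (pblock Rs c) e)) => k z zP.
have K_Rs : nth set0 e k \in Rs by rewrite -mem_enum mem_nth // size_e.
rewrite -(classP _ z K_Rs zP); apply: eq_card => c; rewrite !inE.
have [cB|cNB] := boolP (c \in B); last first.
  by rewrite (contraNF (subsetP (partitionS partRs K_Rs) c) cNB).
have c_cov : c \in cover Rs by rewrite covRs.
have idx : index (pblock Rs c) e < n.+1.
  by rewrite -size_e index_mem mem_enum pblock_mem.
rewrite andTb; apply: andb_id2r => _; apply/eqP/idP => [<-|cK].
  by rewrite /= inordK // nth_index ?mem_enum ?pblock_mem // mem_pblock.
apply: val_inj; rewrite /= inordK // (def_pblock tiRs K_Rs cK).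
by rewrite index_uniq ?size_e ?enum_uniq.
Qed.

Section LabelClasses.
Variables (T : finType) (B : {set {set T}}) (n : nat) (f : {set T} -> 'I_n).
Hypotheses (neqB : forall b, b \in B -> b != set0)
           (fres : label_resolves [set: T] B f).

Definition label_class (k : 'I_n) : {set {set T}} := [set c in B | f c == k].

Lemma label_class_point k x : #|[set c in label_class k | x \in c]| = 1.
Proof.
rewrite -(fres k (in_setT x)); apply: eq_card => c.
by rewrite !inE andbA.
Qed.

Lemma label_class_parallel k : parallel_class B (label_class k).
Proof.
split; first by apply/subsetP=> c; rewrite inE => /andP [].
apply/and3P; split.
- apply/eqP/setP=> x; rewrite inE; apply/bigcupP.
  have [c] := cards1_mem (label_class_point k x).
  by rewrite inE => /andP [ck xc]; exists c.
- apply/trivIsetP=> c1 c2 c1k c2k neq; rewrite -setI_eq0.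
  apply/set0Pn=> -[x]; rewrite inE => /andP [x1 x2].
  have c12 : c1 = c2 by apply: (cards1_eq (label_class_point k x)); apply/setIdP; split.
  by rewrite c12 eqxx in neq.
- by apply/negP; rewrite inE => /andP [/neqB]; rewrite eqxx.
Qed.

Variable x0 : T.

Lemma label_class_x0 k : exists2 c, c \in label_class k & x0 \in c.
Proof. by have [c] := cards1_mem (label_class_point k x0); rewrite inE => /andP [ck x0c]; exists c. Qed.

Lemma label_class_inj : injective label_class.
Proof.
move=> k1 k2 e; have [c ck1 _] := label_class_x0 k1.
have ck2 : c \in label_class k2 by rewrite -e.
by move: ck1 ck2; rewrite !inE => /andP [_ /eqP <-] /andP [_ /eqP].
Qed.

Lemma label_classes_partition : partition [set label_class k | k : 'I_n] B.
Proof.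
apply/and3P; split.
- apply/eqP/setP=> c; apply/bigcupP/idP => [[_ /imsetP [k _ ->]]|cB].
    by rewrite inE => /andP [].
  by exists (label_class (f c)); [apply: imset_f | rewrite inE cB eqxx].
- apply/trivIsetP=> _ _ /imsetP [k1 _ ->] /imsetP [k2 _ ->] neq.
  rewrite -setI_eq0; apply/set0Pn=> -[c]; rewrite !inE.
  by case/andP=> /andP [_ /eqP e1] /andP [_ /eqP e2]; rewrite -e1 -e2 eqxx in neq.
- apply/imsetP=> -[k _ e]; have [c ck _] := label_class_x0 k.
  by rewrite -e inE in ck.
Qed.

Lemma resolution_of_label :
  resolution B [set label_class k | k : 'I_n] /\ #|[set label_class k | k : 'I_n]| = n.
Proof.
split; last by rewrite card_imset ?card_ord //; apply: label_class_inj.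
split; first exact: label_classes_partition.
by move=> _ /imsetP [k _ ->]; apply: label_class_parallel.
Qed.

End LabelClasses.

Section SteinerTripleSystem.
Variables (T : finType) (P : {set T}) (B : {set {set T}}).
Hypothesis sts : sts_on P B.

Lemma block_sub b : b \in B -> b \subset P.
Proof. by case: sts => blocks _ /blocks []. Qed.

Lemma block_card b : b \in B -> #|b| = 3.
Proof. by case: sts => blocks _ /blocks []. Qed.

Lemma block_neq0 b : b \in B -> b != set0.
Proof. by move=> bB; rewrite -card_gt0 block_card. Qed.

Lemma block_unique x y b c : x != y -> b \in B -> c \in B ->
  x \in b -> y \in b -> x \in c -> y \in c -> b = c.
Proof.
move=> xy bB cB xb yb xc yc; case: sts => _ pairs.
have [xP yP] := (subsetP (block_sub bB) x xb, subsetP (block_sub bB) y yb).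
by apply: (cards1_eq (pairs _ _ xP yP xy)); rewrite inE ?bB ?cB ?xb ?yb ?xc ?yc.
Qed.

(* The block through two points (the empty set if there is none). *)
Definition blk x y : {set T} := odflt set0 [pick c in B | (x \in c) && (y \in c)].

Lemma blkP x y : x \in P -> y \in P -> x != y ->
  [/\ blk x y \in B, x \in blk x y & y \in blk x y].
Proof.
case: sts => _ pairs xP yP xy; rewrite /blk.
case: pickP => [c /andP [cB /andP [xc yc]] // | none].
have [c] := cards1_mem (pairs _ _ xP yP xy).
by rewrite inE => /andP [cB xyc]; move: (none c); rewrite cB xyc.
Qed.

Lemma blk_eq x y c : x != y -> c \in B -> x \in c -> y \in c -> blk x y = c.
Proof.
move=> xy cB xc yc.
have [xP yP] := (subsetP (block_sub cB) x xc, subsetP (block_sub cB) y yc).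
by have [bB xb yb] := blkP xP yP xy; apply: (block_unique xy).
Qed.

Lemma third_in_block x y c : x != y -> c \in B -> x \in c -> y \in c ->
  [/\ third B x y \in c, third B x y != x & third B x y != y].
Proof.
move=> xy cB xc yc.
have [w wc wxy] : exists2 w, w \in c & w \notin [set x; y].
  apply/subsetPn; apply: contraTN isT => cxy.
  by have := subset_leq_card cxy; rewrite block_card // cards2 xy.
move: wxy; rewrite !inE negb_or => /andP [wx wy].
have c_xyw : [set x; y; w] = c.
  apply/eqP; rewrite eqEcard block_card //; apply/andP; split.
    by apply/subsetP=> v; rewrite !inE -orbA => /or3P [] /eqP ->.
  by rewrite setUC cardsU1 cards2 !inE negb_or wx wy xy.
rewrite /third; case: pickP => [v /and3P [vx vy vB] | none]; last first.
  by move: (none w); rewrite wx wy c_xyw cB.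
have c_v : [set x; y; v] = c by apply: (block_unique xy); rewrite ?inE ?eqxx ?orbT.
by rewrite vx vy -c_v !inE eqxx orbT.
Qed.

(* Replication: the blocks through x partition the other points into pairs. *)
Lemma replication x : x \in P -> #|P :\ x| = #|[set b in B | x \in b]| * 2.
Proof.
move=> xP; pose Sx := [set b in B | x \in b].
have pair b : b \in Sx -> #|b :\ x| = 2.
  by rewrite inE => /andP [bB xb]; have := cardsD1 x b; rewrite xb block_card // => -[].
have inj : {in Sx &, injective (fun b => b :\ x)}.
  by move=> b c; rewrite !inE => /andP [_ xb] /andP [_ xc] e; rewrite -(setD1K xb) -(setD1K xc) e.
rewrite -(card_in_imset inj); apply: card_uniform_partition.
  by move=> _ /imsetP [b bS ->]; apply: pair.
apply/and3P; split.
- apply/eqP/setP=> y; apply/bigcupP/idP => [[_ /imsetP [b bS ->]]|].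
    move: bS; rewrite !inE => /andP [bB _] /andP [-> yb].
    exact: subsetP (block_sub bB) y yb.
  rewrite !inE => /andP [yx yP]; have xy : x != y by rewrite eq_sym.
  have [bB xb yb] := blkP xP yP xy.
  by exists (blk x y :\ x); [apply: imset_f; rewrite inE bB xb | rewrite !inE yx].
- apply/trivIsetP=> _ _ /imsetP [b bS ->] /imsetP [c cS ->] bc.
  rewrite -setI_eq0; apply/set0Pn=> -[y]; rewrite !inE => /and3P [/andP [yx yb] _ yc].
  move: bS cS bc; rewrite !inE => /andP [bB xb] /andP [cB xc].
  by rewrite (block_unique (x := x) (y := y) _ bB cB) ?eqxx // eq_sym.
- by apply/imsetP=> -[b bS e]; have := pair b bS; rewrite -e cards0.
Qed.

End SteinerTripleSystem.

Section SteinerTripleSystem9.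
Variables (T : finType) (P : {set T}) (B : {set {set T}}).
Hypotheses (sts : sts_on P B) (P9 : #|P| = 9).

Lemma replication9 x : x \in P -> #|[set b in B | x \in b]| = 4.
Proof.
move=> xP; apply/eqP; rewrite -(eqn_pmul2r (isT : 0 < 2)) -(replication sts xP).
by have := cardsD1 x P; rewrite xP P9 add1n => -[<-].
Qed.

(* Playfair's axiom: through a point off a block passes exactly one block
   disjoint from it, since the blocks through x meeting b are the three
   blocks joining x to the points of b. *)
Lemma playfair b x : b \in B -> x \in P -> x \notin b ->
  #|[set c in B | (x \in c) && [disjoint c & b]]| = 1.
Proof.
move=> bB xP xNb.
pose Sx := [set c in B | x \in c]; pose meeting := [set c in Sx | ~~ [disjoint c & b]].
have xy y : y \in b -> x != y by move=> yb; apply: contraNneq xNb => ->.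
have yP : {subset b <= P} := subsetP (block_sub sts bB).
have meetingE : meeting = [set blk B x y | y in b].
  apply/setP=> c; apply/idP/imsetP => [|[y yb ->]].
    rewrite !inE => /andP [/andP [cB xc]]; rewrite -setI_eq0 => /set0Pn [y].
    by rewrite inE => /andP [yc yb]; exists y => //; rewrite (blk_eq sts (xy _ yb) cB xc yc).
  have [cB xc yc] := blkP sts xP (yP _ yb) (xy _ yb).
  by rewrite !inE cB xc -setI_eq0; apply/set0Pn; exists y; rewrite inE yc.
have card_meeting : #|meeting| = 3.
  rewrite meetingE card_in_imset ?(block_card sts bB) // => y1 y2 y1b y2b e.
  apply: contraNeq xNb => y12.
  have [cB xc y1c] := blkP sts xP (yP _ y1b) (xy _ y1b).
  have [_ _ y2c] := blkP sts xP (yP _ y2b) (xy _ y2b); rewrite -e in y2c.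
  by rewrite -(block_unique sts y12 cB bB y1c y2c y1b y2b).
have := cardsID meeting Sx; rewrite (setIidPr _) ?card_meeting ?replication9 //; last first.
  by apply/subsetP=> c; rewrite inE => /andP [].
have -> : [set c in B | (x \in c) && [disjoint c & b]] = Sx :\: meeting.
  by apply/setP=> c; rewrite !inE; case: (c \in B) (x \in c) [disjoint c & b] => [] [] [].
by rewrite -[4]/(3 + 1) => /addnI.
Qed.

Definition par_class b := [set c in B | (c == b) || [disjoint c & b]].

Lemma par_class_self b : b \in B -> b \in par_class b.
Proof. by move=> bB; rewrite inE bB eqxx. Qed.

Lemma par_class_point b z : b \in B -> z \in P ->
  #|[set c in par_class b | z \in c]| = 1.
Proof.
move=> bB zP; have [zb|zNb] := boolP (z \in b).
  apply: (cards1_intro (x := b)); first by rewrite inE par_class_self.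
  move=> c; rewrite !inE => /andP [/andP [_ /orP [/eqP // | dcb]] zc].
  by rewrite (disjointFr dcb zc) in zb.
rewrite -(playfair bB zP zNb); apply: eq_card => c; rewrite !inE.
case: eqP => [->|_]; first by rewrite (negbTE zNb) !andbF.
by case: (c \in B) (z \in c) [disjoint c & b] => [] [] [].
Qed.

(* "Equal or disjoint" is symmetric, and transitive by par_class_point:
   a block of the class of b meeting c must be c itself. *)
Lemma par_class_sym b c : b \in B -> c \in par_class b -> b \in par_class c.
Proof. by move=> bB; rewrite !inE bB eq_sym disjoint_sym => /andP []. Qed.

Lemma par_class_sub b c : b \in B -> c \in par_class b ->
  par_class b \subset par_class c.
Proof.
move=> bB cb; apply/subsetP=> d db; have dB : d \in B by move: db; rewrite inE => /andP [].
rewrite inE dB /=; have [//|dc] := eqVneq d c; rewrite -setI_eq0; apply/set0Pn => -[y].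
rewrite inE => /andP [yd yc]; have yP : y \in P by apply: subsetP (block_sub sts dB) y yd.
have d_c : d = c by apply: (cards1_eq (par_class_point bB yP)); apply/setIdP; split.
by rewrite d_c eqxx in dc.
Qed.

Lemma par_class_eq b c : b \in B -> c \in par_class b -> par_class c = par_class b.
Proof.
move=> bB cb; have cB : c \in B by move: cb; rewrite inE => /andP [].
by apply/eqP; rewrite eqEsubset (par_class_sub bB cb) (par_class_sub cB (par_class_sym bB cb)).
Qed.

Definition parallelism := [set par_class b | b in B].

Lemma parallelism_partition : partition parallelism B.
Proof.
apply/and3P; split.
- apply/eqP/setP=> c; apply/bigcupP/idP => [[_ /imsetP [b _ ->]]|cB].
    by rewrite inE => /andP [].
  by exists (par_class c); [apply: imset_f | apply: par_class_self].
- apply/trivIsetP=> _ _ /imsetP [b bB ->] /imsetP [c cB ->] bc.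
  rewrite -setI_eq0; apply/set0Pn=> -[d]; rewrite inE => /andP [db dc].
  by rewrite -(par_class_eq bB db) (par_class_eq cB dc) eqxx in bc.
- by apply/imsetP=> -[b bB e]; move: (par_class_self bB); rewrite -e inE.
Qed.

(* Each parallel class contains exactly one of the four blocks through a fixed
   point, so there are four parallel classes. *)
Lemma card_parallelism : #|parallelism| = 4.
Proof.
have [x0 x0P] : exists x0, x0 \in P by apply/set0Pn; rewrite -card_gt0 P9.
have -> : parallelism = par_class @: [set b in B | x0 \in b].
  apply/setP=> K; apply/imsetP/imsetP => -[b bB ->]; last first.
    by exists b => //; move: bB; rewrite inE => /andP [].
  have [c] := cards1_mem (par_class_point bB x0P); rewrite inE => /andP [cb x0c].
  have cB : c \in B by move: cb; rewrite inE => /andP [].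
  by exists c; rewrite ?inE ?cB ?x0c // (par_class_eq bB cb).
rewrite card_in_imset ?replication9 // => b c; rewrite !inE => /andP [bB x0b] /andP [cB x0c] e.
apply: (cards1_eq (par_class_point bB x0P)); rewrite in_set ?x0b ?x0c ?andbT.
  exact: par_class_self.
by rewrite e; apply: par_class_self.
Qed.

Lemma sts9_labelling : exists f : {set T} -> 'I_4, label_resolves P B f.
Proof.
apply: (label_of_partition parallelism_partition card_parallelism).
by move=> _ z /imsetP [b bB ->]; apply: par_class_point.
Qed.

End SteinerTripleSystem9.

Lemma sts9_resolvable (T : finType) (B : {set {set T}}) :
  #|T| = 9 -> sts_on [set: T] B -> resolvable B.
Proof.
move=> T9 sts; have [f fres] := sts9_labelling sts (etrans (cardsT T) T9).
have [x0 _] : exists x0, x0 \in [set: T] by apply/set0Pn; rewrite -card_gt0 cardsT T9.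
by have [R _] := resolution_of_label (block_neq0 sts) fres x0; eexists; exact: R.
Qed.

(* The three groups: rows g0, columns g1 and symbols g2 of the Latin square. *)
Notation g0 := (@Ordinal 3 0 isT).
Notation g1 := (@Ordinal 3 1 isT).
Notation g2 := (@Ordinal 3 2 isT).

Lemma ord3_cases (j : 'I_3) : [\/ j = g0, j = g1 | j = g2].
Proof. by case: j => -[|[|[|//]]] lt_j3; [apply: Or31 | apply: Or32 | apply: Or33]; apply: val_inj. Qed.

Section TransversalDesign.
Variables (B : {set {set 'I_27}}) (G : 'I_3 -> {set 'I_27}).
Hypotheses (sts : sts_on [set: 'I_27] B) (G9 : forall i, #|G i| = 9).
Hypothesis Gdisj : forall i j, i != j -> [disjoint G i & G j].
Hypothesis Bsplit : forall b, b \in B ->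
  (exists i, b \subset G i) \/ (forall i, #|b :&: G i| = 1).

Lemma group_unique z i j : z \in G i -> z \in G j -> i = j.
Proof. by move=> zi zj; apply: contraTeq isT => /Gdisj /disjointFr /(_ zi); rewrite zj. Qed.

Lemma group_cover z : exists j, z \in G j.
Proof.
have : z \in G g0 :|: G g1 :|: G g2.
  by rewrite disjoint3_cover ?Gdisj ?G9 ?card_ord ?inE.
by rewrite !inE => /orP [/orP [] | ] zG; [exists g0 | exists g1 | exists g2].
Qed.

Definition transversal (c : {set 'I_27}) : Prop := forall i, #|c :&: G i| = 1.

Definition pt (c : {set 'I_27}) (i : 'I_3) : 'I_27 := odflt ord0 [pick x in c :&: G i].

Lemma ptP c i : #|c :&: G i| = 1 ->
  [/\ pt c i \in c, pt c i \in G i & forall w, w \in c -> w \in G i -> w = pt c i].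
Proof.
move=> /eqP /cards1P [a cGa]; rewrite /pt; case: pickP => [x|]; last first.
  by move/(_ a); rewrite cGa inE eqxx.
rewrite cGa inE => /eqP -> /=.
have : a \in c :&: G i by rewrite cGa inE.
rewrite inE => /andP [ac aG]; split=> // w wc wG.
by apply/eqP; rewrite -in_set1 -cGa inE wc wG.
Qed.

Lemma transversal_mem c j z : transversal c -> z \in G j -> (z \in c) = (pt c j == z).
Proof.
move=> ctr zj; have [ptc _ ptu] := ptP (ctr j).
by apply/idP/eqP => [zc | <- //]; rewrite -(ptu z zc zj).
Qed.

Lemma transversal_not_inner c j : c \in B -> transversal c -> (c \subset G j) = false.
Proof.
move=> cB ctr; apply/negbTE/negP => cj.
by have := ctr j; rewrite (setIidPl cj) (block_card sts cB).
Qed.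

(* The cells of the Latin square are the pairs (row, column) in G g0 x G g1;
   the block of a cell is the block through its row and column points. *)
Definition cells : {set 'I_27 * 'I_27} := setX (G g0) (G g1).

Definition tblk (p : 'I_27 * 'I_27) : {set 'I_27} := blk B p.1 p.2.

Lemma tblk_transversal p : p \in cells ->
  [/\ tblk p \in B, transversal (tblk p), pt (tblk p) g0 = p.1,
      pt (tblk p) g1 = p.2 & pt (tblk p) g2 = third B p.1 p.2].
Proof.
case: p => x y; rewrite inE /tblk /= => /andP [xG yG].
have xy : x != y by apply: contraTneq isT => exy; have := group_unique xG; rewrite exy => /(_ _ yG).
have [cB xc yc] := blkP sts (in_setT x) (in_setT y) xy.
set c := blk B x y in cB xc yc *.
have ctr : transversal c.
  case: (Bsplit cB) => // -[i ci].
  by have := group_unique xG (subsetP ci x xc); have := group_unique yG (subsetP ci y yc) => <-.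
have pt_x : pt c g0 = x by apply/eqP; rewrite -transversal_mem.
have pt_y : pt c g1 = y by apply/eqP; rewrite -transversal_mem.
split=> //; have [tc tx ty] := third_in_block sts xy cB xc yc.
have [j tj] := group_cover (third B x y); rewrite (transversal_mem ctr tj) in tc.
have [] := ord3_cases j => ej; rewrite ej ?pt_x ?pt_y in tc.
- by rewrite eq_sym tc in tx.
- by rewrite eq_sym tc in ty.
- exact/eqP.
Qed.

(* A cell is recovered from its block, so tblk is injective on cells. *)
Lemma tblk_cancel p : p \in cells -> (pt (tblk p) g0, pt (tblk p) g1) = p.
Proof. by case: p => x y pc; have [_ _ -> -> _] := tblk_transversal pc. Qed.

Lemma tblk_inj : {in cells &, injective tblk}.
Proof. by move=> p1 p2 c1 c2 e; rewrite -(tblk_cancel c1) -(tblk_cancel c2) e. Qed.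

Lemma transversal_cell c : c \in B -> transversal c ->
  (pt c g0, pt c g1) \in cells /\ tblk (pt c g0, pt c g1) = c.
Proof.
move=> cB ctr; have [p0c p0G _] := ptP (ctr g0); have [p1c p1G _] := ptP (ctr g1).
split; first by rewrite inE p0G p1G.
apply: (blk_eq sts _ cB p0c p1c); apply: contraTneq isT => e.
by have := group_unique p0G; rewrite e => /(_ _ p1G).
Qed.

Variable M : 'I_27 -> 'I_27 -> 'I_9.
Hypothesis latin : latin_on (G g0) (G g1) [set: 'I_9] M.
Hypothesis orth : orthogonal_on (G g0) (G g1) (third B) M.

(* For each group j, a cell is determined by its point in G j and its entry
   in M: for rows and columns since M is Latin, for symbols by orthogonality. *)
Lemma cell_coordinate_inj j :
  {in cells &, injective (fun p => (pt (tblk p) j, M p.1 p.2))}.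
Proof.
have [_ _ _ rowinj colinj] := latin.
move=> p1 p2 c1 c2; have [_ _ a1 b1 t1] := tblk_transversal c1.
have [_ _ a2 b2 t2] := tblk_transversal c2.
move: c1 c2 a1 b1 t1 a2 b2 t2; case: p1 p2 => [x1 y1] [x2 y2].
rewrite !inE /= => /andP [x1G y1G] /andP [x2G y2G] a1 b1 t1 a2 b2 t2.
have [] := ord3_cases j => -> /=; rewrite ?a1 ?a2 ?b1 ?b2 ?t1 ?t2 => -[e eM].
- by rewrite -e in x2G eM *; rewrite (rowinj x1 x1G y1 y2 y1G y2G eM).
- by rewrite -e in y2G eM *; rewrite (colinj y1 y1G x1 x2 x1G x2G eM).
- by apply: orth; rewrite ?inE /= ?x1G ?y1G ?x2G ?y2G //= e eM.
Qed.

(* Hence each (point of G j, symbol) pair is realised by exactly one cell,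
   since both sets have 81 elements. *)
Lemma cell_fibre j z s : z \in G j ->
  #|[set p in cells | (pt (tblk p) j, M p.1 p.2) == (z, s)]| = 1.
Proof.
move=> zj; apply: (inj_fibre_card1 (C := setX (G j) [set: 'I_9])).
- exact: cell_coordinate_inj.
- apply/subsetP=> _ /imsetP [p pc ->]; have [_ ptr _ _ _] := tblk_transversal pc.
  by have [_ ptG _] := ptP (ptr j); rewrite inE /= ptG in_setT.
- by rewrite !cardsX !G9 cardsT card_ord.
- by rewrite inE /= zj in_setT.
Qed.

Variable F : 'I_3 -> {set 'I_27} -> 'I_4.
Hypothesis Fres : forall i, label_resolves (G i) [set b in B | b \subset G i] (F i).

(* The 13 parallel classes: the labels 0..3 combine the resolutions of the
   three STS(9)'s on the groups, the labels 4..12 are the symbols of the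
   orthogonal mate M, applied to the cells of the transversal blocks. *)
Definition label (c : {set 'I_27}) : 'I_(4 + 9) :=
  if [pick i | c \subset G i] is Some i then lshift 9 (F i c)
  else rshift 4 (M (pt c g0) (pt c g1)).

Lemma label_inner c j : c \in B -> c \subset G j -> label c = lshift 9 (F j c).
Proof.
move=> cB cj; rewrite /label; case: pickP => [i ci|]; last by move/(_ j); rewrite cj.
have /set0Pn [x xc] := block_neq0 sts cB.
by rewrite (group_unique (subsetP ci x xc) (subsetP cj x xc)).
Qed.

Lemma label_transversal c : c \in B -> transversal c ->
  label c = rshift 4 (M (pt c g0) (pt c g1)).
Proof.
move=> cB ctr; rewrite /label; case: pickP => [i|//].
by rewrite (transversal_not_inner i cB ctr).
Qed.

(* Through a point z of G j, the blocks with an inner label k are the blocks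
   of the STS(9) on G j with label k, and there is exactly one of them. *)
Lemma label_inner_card k z : #|[set c in B | (label c == lshift 9 k) && (z \in c)]| = 1.
Proof.
have [j zj] := group_cover z; rewrite -[RHS](@Fres j k z zj); apply: eq_card => c; rewrite !inE.
have [cB|] //= := boolP (c \in B); case: (Bsplit cB) => [[i ci]|ctr].
  have [zc|] := boolP (z \in c); last by rewrite !andbF.
  by rewrite -(group_unique (subsetP ci z zc) zj) ci (label_inner cB ci) eq_lshift.
by rewrite (label_transversal cB ctr) eq_rlshift (transversal_not_inner j cB ctr).
Qed.

(* Through a point z of G j, the blocks with symbol label s are the blocks of
   the cells whose G j-point is z and whose M-entry is s: exactly one. *)
Lemma label_transversal_card s z : #|[set c in B | (label c == rshift 4 s) && (z \in c)]| = 1.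
Proof.
have [j zj] := group_cover z.
have fibre_inj : {in [set p in cells | (pt (tblk p) j, M p.1 p.2) == (z, s)] &, injective tblk}.
  by apply: sub_in2 tblk_inj => p; rewrite inE => /andP [].
rewrite -[RHS](cell_fibre s zj) -(card_in_imset fibre_inj).
apply: eq_card => c; apply/idP/imsetP => [|[p]].
  rewrite inE => /andP [cB /andP [/eqP lc zc]]; case: (Bsplit cB) => [[i ci]|ctr].
    by move: lc; rewrite (label_inner cB ci) => /eqP; rewrite eq_lrshift.
  have [pc tblkc] := transversal_cell cB ctr.
  exists (pt c g0, pt c g1); last by rewrite tblkc.
  rewrite inE pc tblkc xpair_eqE -(transversal_mem ctr zj) zc /=.
  by move: lc; rewrite (label_transversal cB ctr) => /rshift_inj ->.
rewrite inE => /andP [pc /eqP [ptz Ms]] ->.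
have [cB ctr p1 p2 _] := tblk_transversal pc.
by rewrite inE cB (transversal_mem ctr zj) ptz (label_transversal cB ctr) p1 p2 Ms !eqxx.
Qed.

Lemma label_resolves_all : label_resolves [set: 'I_27] B label.
Proof.
move=> k z _; case: (split_ordP k) => [k' ->|s ->].
  exact: label_inner_card.
exact: label_transversal_card.
Qed.

End TransversalDesign.

Theorem proposition3p6 :
  (* (a) *)
  (forall B : {set {set 'I_9}},
     sts_on [set: 'I_9] B -> rank3 B <= 8 -> resolvable B) /\
  (* (b) *)
  (forall (B : {set {set 'I_27}}) (G : 'I_3 -> {set 'I_27}),
     sts_on [set: 'I_27] B -> rank3 B <= 25 ->
     (forall i, #|G i| = 9) ->
     (forall i j, i != j -> [disjoint G i & G j]) ->
     (forall i, sts_on (G i) [set b in B | b \subset G i]) ->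
     (forall b, b \in B ->
        (exists i, b \subset G i) \/ (forall i, #|b :&: G i| = 1)) ->
     (exists M : 'I_27 -> 'I_27 -> 'I_9,  (* orthogonal mate of the TD Latin square: rows G_1, cols G_2, symbols G_3 *)
        latin_on (G (@Ordinal 3 0 isT)) (G (@Ordinal 3 1 isT)) [set: 'I_9] M /\
        orthogonal_on (G (@Ordinal 3 0 isT)) (G (@Ordinal 3 1 isT)) (third B) M) ->
     exists R, resolution B R /\ #|R| = 13).
Proof.
split=> [B sts _ | B G sts _ G9 Gdisj Ginner Bsplit [M [latin orth]]].
  exact: sts9_resolvable (card_ord 9) sts.
have /fin_all_exists [F Fres] : forall i, exists f : {set 'I_27} -> 'I_4,
    label_resolves (G i) [set b in B | b \subset G i] f.
  by move=> i; apply: sts9_labelling (Ginner i) (G9 i).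
have labelling := label_resolves_all sts G9 Gdisj Bsplit latin orth Fres.
have [res card] := resolution_of_label (block_neq0 sts) labelling ord0.
by eexists; split; [exact: res | exact: card].
Qed.
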